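(* If $B\ge0.287$, then the maximum of $x\mapsto|\Delta(x+iB)|$ over $x\in[-\tfrac12,\tfrac12]$ is attained at $x=\tfrac12$ (and, by symmetry, at $x=-\tfrac12$).
   Context: $q=e^{2\pi iz}$ and $\Delta(z)=q\prod_{n\ge1}(1-q^n)^{24}$ is the modular discriminant. *)

From Stdlib Require Import Reals.
From Coquelicot Require Import Coquelicot.
Open Scope R_scope.

Definition cexp (w : C) : C := (exp (Re w) * cos (Im w), exp (Re w) * sin (Im w)).

Definition qvar (z : C) : C := cexp (Cmult (RtoC (2 * PI)) (Cmult Ci z)).

Fixpoint eta_partial (q : C) (N : nat) : C :=
  match N with
  | O => RtoC 1
  | S m => Cmult (eta_partial q m) (Cpow (Cminus (RtoC 1) (Cpow q (S m))) 24)
  end.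

Definition infprod (q : C) : C :=
  (real (Lim_seq (fun N => fst (eta_partial q N))),
   real (Lim_seq (fun N => snd (eta_partial q N)))).

Definition modDelta (z : C) : C := Cmult (qvar z) (infprod (qvar z)).

(* Write q = r e^{it} with r = e^{-2 pi B} <= 7/40, so that
   |Delta(x + iB)| = r prod_n |1 - q^n|^24; it suffices to show that each partial
   product prod_{n <= N} |1 - q^n|^2 with N >= 3 is largest at t = pi.
   Put u = 1 + cos t in [0, 2].  The first three factors together lose a factor
   1 - 50 r^4 u compared with t = pi (a polynomial inequality in r and u).  For
   n >= 4, cos (n pi) - cos (n t) <= n^2 (1 + cos t) shows that |1 - q^n|^2 gains at
   most a factor 1 + beta_n u, with beta_n = 2 n^2 r^n / (1 - r^4)^2.  These beta_n
   decay geometrically and sum to at most 50 r^4, so the gains never make up for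
   the initial loss. *)

From Stdlib Require Import Reals Lia Lra Psatz.
From Coquelicot Require Import Coquelicot.
Open Scope R_scope.

Lemma exp_le_exp (a b : R) : a <= b -> exp a <= exp b.
Proof. intros [Hlt | ->]; [left; apply exp_increasing; exact Hlt | lra]. Qed.

Lemma Rabs_sin_mult_INR_le (n : nat) (y : R) : Rabs (sin (INR n * y)) <= INR n * Rabs (sin y).
Proof.
  induction n as [| n IH].
  - simpl; rewrite Rmult_0_l, sin_0, Rabs_R0; lra.
  - rewrite S_INR, Rmult_plus_distr_r, Rmult_1_l, sin_plus.
    eapply Rle_trans; [apply Rabs_triang |].
    rewrite !Rabs_mult.
    assert (Rabs (cos y) <= 1) by (apply Rabs_le, COS_bound).
    assert (Rabs (cos (INR n * y)) <= 1) by (apply Rabs_le, COS_bound).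
    pose proof (Rabs_pos (sin (INR n * y))). pose proof (Rabs_pos (sin y)).
    nra.
Qed.

Lemma one_sub_cos_mult_INR_le (n : nat) (p : R) :
  1 - cos (INR n * p) <= INR n ^ 2 * (1 - cos p).
Proof.
  replace (INR n * p) with (2 * (INR n * (p / 2))) by field.
  replace p with (2 * (p / 2)) at 2 by field.
  rewrite !cos_2a_sin.
  assert (Hsq : sin (INR n * (p / 2)) ^ 2 <= (INR n * Rabs (sin (p / 2))) ^ 2).
  { rewrite <- pow2_abs; apply pow_incr.
    split; [apply Rabs_pos | apply Rabs_sin_mult_INR_le]. }
  rewrite Rpow_mult_distr, pow2_abs in Hsq.
  nra.
Qed.

Lemma sin_INR_mult_PI (n : nat) : sin (INR n * PI) = 0.
Proof.
  induction n as [| n IH].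
  - simpl; rewrite Rmult_0_l; apply sin_0.
  - rewrite S_INR, Rmult_plus_distr_r, Rmult_1_l, sin_plus, IH, sin_PI; ring.
Qed.

Lemma cos_mult_PI_sub_cos_le (n : nat) (t : R) :
  cos (INR n * PI) - cos (INR n * t) <= INR n ^ 2 * (1 + cos t).
Proof.
  replace (INR n * t) with (INR n * (t - PI) + INR n * PI) by ring.
  rewrite cos_plus, sin_INR_mult_PI.
  pose proof (one_sub_cos_mult_INR_le n (t - PI)) as H.
  rewrite cos_minus, cos_PI, sin_PI in H.
  pose proof (COS_bound (INR n * PI)). pose proof (COS_bound (INR n * (t - PI))).
  nra.
Qed.

Lemma cos_3a (t : R) : cos (3 * t) = 4 * cos t ^ 3 - 3 * cos t.
Proof.
  replace (3 * t) with (2 * t + t) by ring.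
  rewrite cos_plus, cos_2a_cos, sin_2a.
  pose proof (sin2_cos2 t) as H; unfold Rsqr in H.
  replace (2 * sin t * cos t * sin t) with (2 * cos t * (sin t * sin t)) by ring.
  replace (sin t * sin t) with (1 - cos t * cos t) by lra.
  ring.
Qed.

Lemma pow_double (r : R) (n : nat) : r ^ (2 * n) = r ^ n * r ^ n.
Proof. rewrite <- pow_add; f_equal; lia. Qed.

Lemma ex_finite_lim_seq_geometric_increments (u : nat -> R) (K p : R) : 0 <= p < 1 ->
  (forall n, Rabs (u (S n) - u n) <= K * p ^ n) -> ex_finite_lim_seq u.
Proof.
  intros Hp Hinc.
  assert (Hsum : ex_series (fun n => u (S n) - u n)).
  { apply (ex_series_le (fun n => u (S n) - u n) (fun n => K * p ^ n)); [exact Hinc |].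
    apply (ex_series_scal_l K (fun n => p ^ n)), ex_series_geom; rewrite Rabs_right; lra. }
  destruct Hsum as [l Hl].
  exists (u O + l).
  apply is_lim_seq_incr_1.
  apply is_lim_seq_ext with (fun N => u O + sum_n (fun n => u (S n) - u n) N).
  - induction n as [| N IH].
    + rewrite sum_O; ring.
    + rewrite sum_Sn, <- IH; unfold plus; simpl; ring.
  - apply is_lim_seq_plus'; [apply is_lim_seq_const | exact Hl].
Qed.

Lemma Cmod_one_sub_le (z : C) : Cmod (1 - z) <= 1 + Cmod z.
Proof.
  unfold Cminus; eapply Rle_trans; [apply Cmod_triangle |].
  rewrite Cmod_opp, Cmod_1; lra.
Qed.

Lemma Cmod_Cpow_sub_le (a b : C) (M : R) (n : nat) : 1 <= M -> Cmod a <= M -> Cmod b <= M ->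
  Cmod (a ^ n - b ^ n) <= INR n * M ^ n * Cmod (a - b).
Proof.
  intros HM Ha Hb; induction n as [| n IH].
  - simpl; replace (1 - 1)%C with (RtoC 0) by (apply injective_projections; simpl; ring).
    rewrite Cmod_0; lra.
  - rewrite !Cpow_S.
    replace (a * a ^ n - b * b ^ n)%C with (a * (a ^ n - b ^ n) + (a - b) * b ^ n)%C by ring.
    eapply Rle_trans; [apply Cmod_triangle |].
    rewrite !Cmod_mult, Cmod_pow, S_INR.
    pose proof (Cmod_ge_0 a). pose proof (Cmod_ge_0 (a - b)).
    pose proof (Cmod_ge_0 (a ^ n - b ^ n)). pose proof (pos_INR n).
    assert (Cmod b ^ n <= M ^ n) by (apply pow_incr; split; [apply Cmod_ge_0 | exact Hb]).
    assert (1 <= M ^ n) by (apply pow_R1_Rle; lra).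
    assert (Cmod a * Cmod (a ^ n - b ^ n) <= M * (INR n * M ^ n * Cmod (a - b)))
      by (apply Rmult_le_compat; auto).
    assert (Cmod (a - b) * Cmod b ^ n <= Cmod (a - b) * (M * M ^ n))
      by (apply Rmult_le_compat_l; nra).
    simpl pow; nra.
Qed.

(** * Products perturbed by geometrically decaying factors *)

Section PerturbedProducts.

Variables (u K rho : R) (beta e A D : nat -> R).
Hypotheses (Hu : 0 <= u) (Hrho : 0 <= rho < 1)
  (Hbeta : forall n, 0 <= beta n) (Hbeta_succ : forall n, beta (S n) <= rho * beta n)
  (HK : beta 0 / (1 - rho) <= K)
  (He : forall n, 0 <= e n) (HD : forall n, 0 <= D n)
  (HD_succ : forall n, D (S n) = D n * e n)
  (HA_succ : forall n, A (S n) <= A n * (e n * (1 + beta n * u)))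
  (HA0 : A 0 <= D 0 * (1 - u * K)).

(* [T] is the part of the budget [K] consumed by the factors so far; the
   geometric decay of [beta] keeps the rest of the budget available. *)
Lemma perturbed_product_invariant (n : nat) :
  exists T, T + beta n / (1 - rho) <= K /\ A n <= D n * (1 - u * (K - T)).
Proof.
  induction n as [| n [T [HT HA]]].
  - exists 0; split; [lra | rewrite Rminus_0_r; exact HA0].
  - exists (T + beta n); split.
    + assert (beta (S n) / (1 - rho) <= rho * beta n / (1 - rho))
        by (apply Rmult_le_compat_r; [left; apply Rinv_0_lt_compat; lra | apply Hbeta_succ]).
      assert (beta n / (1 - rho) = beta n + rho * beta n / (1 - rho)) by (field; lra).
      lra.
    + assert (HTK : 0 <= K - T).
      { assert (0 <= beta n / (1 - rho))
          by (apply Rdiv_le_0_compat; [apply Hbeta | lra]).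
        lra. }
      pose proof (Hbeta n). pose proof (He n). pose proof (HD n).
      assert (0 <= beta n * u) by (apply Rmult_le_pos; lra).
      assert (0 <= e n * (1 + beta n * u)) by (apply Rmult_le_pos; lra).
      rewrite HD_succ.
      eapply Rle_trans; [apply HA_succ |].
      eapply Rle_trans; [apply Rmult_le_compat_r; [eassumption | exact HA] |].
      assert (0 <= D n * e n * (u * u * beta n * (K - T)))
        by (apply Rmult_le_pos; [apply Rmult_le_pos | repeat apply Rmult_le_pos]; lra).
      replace (D n * (1 - u * (K - T)) * (e n * (1 + beta n * u)))
        with (D n * e n * (1 - u * (K - (T + beta n))) - D n * e n * (u * u * beta n * (K - T)))
        by ring.
      lra.
Qed.

Lemma perturbed_product_le (n : nat) : A n <= D n.
Proof.
  destruct (perturbed_product_invariant n) as [T [HT HA]].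
  assert (0 <= beta n / (1 - rho)) by (apply Rdiv_le_0_compat; [apply Hbeta | lra]).
  assert (0 <= u * (K - T)) by (apply Rmult_le_pos; lra).
  pose proof (HD n).
  nra.
Qed.

End PerturbedProducts.

Lemma PI_ge_309 : 309 / 100 <= PI.
Proof.
  destruct (PI_ineq 10) as [H _].
  unfold tg_alt, PI_tg in H; simpl in H.
  rewrite ?S_INR, ?plus_INR, ?mult_INR in H; simpl in H.
  lra.
Qed.

Lemma exp_ge_40_7 (y : R) : 17736 / 10000 <= y -> 40 / 7 <= exp y.
Proof.
  intros Hy.
  pose proof (exp_ge_taylor (17736 / 10000) 6 ltac:(lra)) as Htaylor; simpl in Htaylor.
  pose proof (exp_le_exp _ _ Hy).
  lra.
Qed.

Lemma nome_le (B : R) : 287 / 1000 <= B -> 0 < exp (- (2 * PI * B)) <= 7 / 40.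
Proof.
  intros HB; split; [apply exp_pos |].
  assert (Hexp : 40 / 7 <= exp (2 * PI * B))
    by (apply exp_ge_40_7; pose proof PI_ge_309; nra).
  rewrite exp_Ropp.
  apply (Rmult_le_reg_l (exp (2 * PI * B))); [apply exp_pos |].
  rewrite Rinv_r; lra.
Qed.

(** * The first three factors *)

(* Expanding the three normalized leading factors to first order gives
   [1 + u r (bracket r r u) - 50 r^4 u].  The bracket is increasing in [r] and
   decreasing in [s], so on a strip [s0 <= r <= r1] it is bounded by a cubic in [u]. *)
Definition bracket (s r u : R) : R :=
  -(144/100) + 43/10 * r * (2 - u) + 50 * r ^ 3
  - 19/10 * s ^ 2 * (1 - 2 * r * u) * (2 * u - 3) ^ 2.

Lemma bracket_le_corner (s0 s r r1 u : R) :
  0 <= s0 <= s -> 0 <= r <= r1 -> 0 <= u <= 2 -> 0 <= 1 - 2 * r1 * u ->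
  bracket s r u <= bracket s0 r1 u.
Proof.
  intros Hs Hr Hu Hr1. unfold bracket.
  assert (r ^ 3 <= r1 ^ 3) by (apply pow_incr; lra).
  assert (s0 ^ 2 <= s ^ 2) by (apply pow_incr; lra).
  assert (0 <= s0 ^ 2) by (apply pow2_ge_0).
  assert (0 <= (2 * u - 3) ^ 2) by (apply pow2_ge_0).
  assert (s0 ^ 2 * (1 - 2 * r1 * u) <= s ^ 2 * (1 - 2 * r * u)) by
    (apply Rmult_le_compat; nra).
  nra.
Qed.

Lemma bracket_diag_nonpos (r u : R) : 0 <= r <= 7/40 -> 0 <= u <= 2 -> bracket r r u <= 0.
Proof.
  intros Hr Hu.
  destruct (Rle_lt_dec r (14/100)) as [Hr1 | Hr1].
  { apply Rle_trans with (bracket 0 (14/100) u); [apply bracket_le_corner; lra |].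
    unfold bracket; nra. }
  destruct (Rle_lt_dec r (63/400)) as [Hr2 | Hr2].
  { apply Rle_trans with (bracket (14/100) (63/400) u); [apply bracket_le_corner; lra |].
    unfold bracket; nra. }
  apply Rle_trans with (bracket (63/400) (7/40) u); [apply bracket_le_corner; lra |].
  unfold bracket; nra.
Qed.

Lemma normalized_product_le (r u a b d : R) :
  0 < r <= 7/40 -> 0 <= u <= 2 ->
  144/100 * r <= a <= 2 * r -> 0 <= b <= 43/10 * r ^ 2 -> 19/10 * r ^ 3 <= d ->
  (1 - a * u) * (1 + b * (u * (2 - u))) * (1 - d * (u * (2 * u - 3) ^ 2))
  <= 1 - 50 * r ^ 4 * u.
Proof.
  intros Hr Hu Ha Hb Hd.
  set (W := u * (2 - u)). set (V := u * (2 * u - 3) ^ 2).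
  assert (HW : 0 <= W) by (unfold W; nra).
  assert (HV : 0 <= V) by (unfold V; apply Rmult_le_pos; [lra | apply pow2_ge_0]).
  assert (Hr3 : 0 <= r ^ 3) by (apply pow_le; lra).
  assert (HdV : 19/10 * r ^ 3 * V <= d * V) by nra.
  assert (HX : 1 - 2 * r * u <= 1 - a * u) by nra.
  assert (HX0 : 0 <= 1 - 2 * r * u) by nra.
  assert (Hlin : (1 - a * u) * (1 + b * W) * (1 - d * V)
                 <= 1 - 144/100 * r * u + 43/10 * r ^ 2 * W - (1 - 2 * r * u) * (19/10 * r ^ 3 * V)).
  { assert (0 <= b * W) by (apply Rmult_le_pos; lra).
    assert (0 <= (1 - a * u) * (d * V) * (b * W))
      by (apply Rmult_le_pos; [apply Rmult_le_pos |]; nra).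
    assert ((1 - 2 * r * u) * (19/10 * r ^ 3 * V) <= (1 - a * u) * (d * V))
      by (apply Rmult_le_compat; nra).
    assert (0 <= a * u * (b * W)) by (apply Rmult_le_pos; nra).
    assert ((1 - a * u) * (b * W) <= b * W) by nra.
    assert (b * W <= 43/10 * r ^ 2 * W) by nra.
    assert (1 - a * u <= 1 - 144/100 * r * u) by nra.
    assert ((1 - a * u) * (1 + b * W) * (1 - d * V)
            = (1 - a * u) + (1 - a * u) * (b * W) - (1 - a * u) * (d * V)
              - (1 - a * u) * (d * V) * (b * W)) by ring.
    lra. }
  assert (Hid : 1 - 144/100 * r * u + 43/10 * r ^ 2 * W - (1 - 2 * r * u) * (19/10 * r ^ 3 * V)
                = 1 + u * r * bracket r r u - 50 * r ^ 4 * u)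
    by (unfold W, V, bracket; ring).
  pose proof (bracket_diag_nonpos r u ltac:(lra) Hu).
  assert (0 <= u * r) by nra.
  nra.
Qed.

Lemma first_three_factors_le (r u : R) : 0 < r <= 7/40 -> 0 <= u <= 2 ->
  ((1 + r) ^ 2 - 2 * r * u) * ((1 - r ^ 2) ^ 2 + 4 * r ^ 2 * (u * (2 - u)))
  * ((1 + r ^ 3) ^ 2 - 2 * r ^ 3 * (u * (2 * u - 3) ^ 2))
  <= (1 + r) ^ 2 * (1 - r ^ 2) ^ 2 * (1 + r ^ 3) ^ 2 * (1 - 50 * r ^ 4 * u).
Proof.
  intros Hr Hu.
  set (p1 := (1 + r) ^ 2). set (p2 := (1 - r ^ 2) ^ 2). set (p3 := (1 + r ^ 3) ^ 2).
  assert (Hp1 : 1 <= p1 <= 1381/1000) by (unfold p1; nra).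
  assert (Hp2 : 935/1000 <= p2 <= 1).
  { unfold p2. assert (0 <= r ^ 2 <= 49/1600) by nra. nra. }
  assert (Hp3 : 1 <= p3 <= 105/100).
  { unfold p3. assert (0 <= r ^ 3 <= 343/64000) by nra. nra. }
  assert (0 <= r ^ 2) by (apply pow_le; lra).
  assert (0 <= r ^ 3) by (apply pow_le; lra).
  set (a := 2 * r / p1). set (b := 4 * r ^ 2 / p2). set (d := 2 * r ^ 3 / p3).
  assert (Ha : 144/100 * r <= a <= 2 * r).
  { unfold a; split; apply Rmult_le_reg_r with p1; try lra; field_simplify; nra. }
  assert (Hb : 0 <= b <= 43/10 * r ^ 2).
  { unfold b; split; [apply Rdiv_le_0_compat; lra |].
    apply Rmult_le_reg_r with p2; [lra |]; field_simplify; nra. }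
  assert (Hd : 19/10 * r ^ 3 <= d).
  { unfold d; apply Rmult_le_reg_r with p3; [lra |]; field_simplify; nra. }
  pose proof (normalized_product_le r u a b d Hr Hu Ha Hb Hd) as Hnorm.
  replace (p1 - 2 * r * u) with (p1 * (1 - a * u)) by (unfold a; field; lra).
  replace (p2 + 4 * r ^ 2 * (u * (2 - u))) with (p2 * (1 + b * (u * (2 - u))))
    by (unfold b; field; lra).
  replace (p3 - 2 * r ^ 3 * (u * (2 * u - 3) ^ 2)) with (p3 * (1 - d * (u * (2 * u - 3) ^ 2)))
    by (unfold d; field; lra).
  assert (0 < p1 * p2 * p3) by (apply Rmult_lt_0_compat; [apply Rmult_lt_0_compat |]; lra).
  match goal with |- ?L <= _ => replace L with
    (p1 * p2 * p3 * ((1 - a * u) * (1 + b * (u * (2 - u))) * (1 - d * (u * (2 * u - 3) ^ 2))))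
    by ring end.
  apply Rmult_le_compat_l; lra.
Qed.

(* [normsq_factor r t n] is [|1 - q ^ n| ^ 2] for [q = r e^{it}]. *)
Definition normsq_factor (r t : R) (n : nat) : R :=
  1 - 2 * r ^ n * cos (INR n * t) + r ^ (2 * n).

Fixpoint normsq_prod (r t : R) (N : nat) : R :=
  match N with
  | O => 1
  | S m => normsq_prod r t m * normsq_factor r t (S m)
  end.

Lemma normsq_factor_ge (r t : R) (n : nat) : 0 <= r -> (1 - r ^ n) ^ 2 <= normsq_factor r t n.
Proof.
  intros Hr; unfold normsq_factor; rewrite pow_double.
  pose proof (COS_bound (INR n * t)).
  assert (0 <= r ^ n) by (apply pow_le; lra).
  nra.
Qed.

Lemma normsq_prod_nonneg (r t : R) (N : nat) : 0 <= r -> 0 <= normsq_prod r t N.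
Proof.
  intros Hr; induction N as [| N IH]; simpl; [lra |].
  apply Rmult_le_pos; [exact IH |].
  eapply Rle_trans; [apply pow2_ge_0 | apply normsq_factor_ge; exact Hr].
Qed.

Lemma normsq_prod_3_le (r t : R) : 0 < r <= 7 / 40 ->
  normsq_prod r t 3 <= normsq_prod r PI 3 * (1 - 50 * r ^ 4 * (1 + cos t)).
Proof.
  intros Hr.
  assert (Hprod : forall s, normsq_prod r s 3
                  = normsq_factor r s 1 * normsq_factor r s 2 * normsq_factor r s 3)
    by (intros; simpl; ring).
  rewrite !Hprod; unfold normsq_factor.
  replace (INR 1) with 1 by reflexivity.
  replace (INR 2) with 2 by (simpl; ring).
  replace (INR 3) with 3 by (simpl; ring).
  rewrite !Rmult_1_l, !cos_2a_cos, !cos_3a, cos_PI.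
  pose proof (COS_bound t).
  pose proof (first_three_factors_le r (1 + cos t) Hr ltac:(lra)) as Hthree.
  cbv [Nat.mul Nat.add].
  lra.
Qed.

Definition tail_weight (r : R) (n : nat) : R := 2 * INR n ^ 2 * r ^ n / (1 - r ^ 4) ^ 2.

Lemma tail_weight_nonneg (r : R) (n : nat) : 0 <= r < 1 -> 0 <= tail_weight r n.
Proof.
  intros Hr; unfold tail_weight.
  assert (r ^ 4 < 1) by (apply pow_lt_1_compat; [lra | lia]).
  assert (0 < (1 - r ^ 4) ^ 2) by (apply pow_lt; lra).
  apply Rdiv_le_0_compat; [| lra].
  assert (0 <= r ^ n) by (apply pow_le; lra).
  pose proof (pow2_ge_0 (INR n)). nra.
Qed.

Lemma tail_weight_succ_le (r : R) (n : nat) : 0 <= r < 1 -> (4 <= n)%nat ->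
  tail_weight r (S n) <= 2 * r * tail_weight r n.
Proof.
  intros Hr Hn; unfold tail_weight.
  assert (r ^ 4 < 1) by (apply pow_lt_1_compat; [lra | lia]).
  assert (0 < (1 - r ^ 4) ^ 2) by (apply pow_lt; lra).
  assert (4 <= INR n) by (replace 4 with (INR 4) by (simpl; ring); apply le_INR; exact Hn).
  assert (0 <= r ^ n) by (apply pow_le; lra).
  set (X := r * r ^ n * / (1 - r ^ 4) ^ 2).
  assert (0 <= X).
  { apply Rmult_le_pos; [apply Rmult_le_pos; lra | left; apply Rinv_0_lt_compat; lra]. }
  replace (2 * INR (S n) ^ 2 * r ^ S n / (1 - r ^ 4) ^ 2) with (2 * INR (S n) ^ 2 * X)
    by (unfold X; simpl pow; field; lra).
  replace (2 * r * (2 * INR n ^ 2 * r ^ n / (1 - r ^ 4) ^ 2)) with (2 * (2 * INR n ^ 2) * X)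
    by (unfold X; field; lra).
  rewrite S_INR.
  assert ((INR n + 1) ^ 2 <= 2 * INR n ^ 2) by nra.
  apply Rmult_le_compat_r; lra.
Qed.

Lemma tail_weight_4_le (r : R) : 0 <= r <= 7 / 40 -> tail_weight r 4 / (1 - 2 * r) <= 50 * r ^ 4.
Proof.
  intros Hr; unfold tail_weight.
  assert (Hr4 : 0 <= r ^ 4 <= 1 / 1000).
  { split; [apply pow_le; lra |].
    assert (r ^ 4 <= (7 / 40) ^ 4) by (apply pow_incr; lra). lra. }
  assert (Hq : 998 / 1000 <= (1 - r ^ 4) ^ 2) by nra.
  replace (INR 4) with 4 by (simpl; ring).
  apply Rmult_le_reg_r with ((1 - r ^ 4) ^ 2 * (1 - 2 * r)); [apply Rmult_lt_0_compat; lra |].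
  field_simplify; [| lra].
  nra.
Qed.

Lemma normsq_factor_le_PI (r t : R) (n : nat) : 0 <= r < 1 -> (4 <= n)%nat ->
  normsq_factor r t n <= normsq_factor r PI n * (1 + tail_weight r n * (1 + cos t)).
Proof.
  intros Hr Hn.
  assert (Hrn : 0 <= r ^ n <= r ^ 4).
  { split; [apply pow_le; lra |].
    replace n with (4 + (n - 4))%nat by lia; rewrite pow_add.
    assert (r ^ (n - 4) <= 1) by (rewrite <- (pow1 (n - 4)); apply pow_incr; lra).
    assert (0 <= r ^ 4) by (apply pow_le; lra).
    nra. }
  assert (r ^ 4 < 1) by (apply pow_lt_1_compat; [lra | lia]).
  assert (Hfac : (1 - r ^ 4) ^ 2 <= normsq_factor r PI n).
  { eapply Rle_trans; [| apply normsq_factor_ge; lra]. apply pow_incr; lra. }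
  assert (Hw : 2 * INR n ^ 2 * r ^ n = (1 - r ^ 4) ^ 2 * tail_weight r n).
  { unfold tail_weight; field. nra. }
  pose proof (cos_mult_PI_sub_cos_le n t).
  pose proof (tail_weight_nonneg r n Hr).
  pose proof (COS_bound t).
  assert (0 <= tail_weight r n * (1 + cos t)) by (apply Rmult_le_pos; lra).
  assert ((1 - r ^ 4) ^ 2 * (tail_weight r n * (1 + cos t))
          <= normsq_factor r PI n * (tail_weight r n * (1 + cos t)))
    by (apply Rmult_le_compat_r; lra).
  unfold normsq_factor in *.
  nra.
Qed.

Lemma normsq_prod_le_PI (r t : R) (N : nat) : 0 < r <= 7 / 40 -> (3 <= N)%nat ->
  normsq_prod r t N <= normsq_prod r PI N.
Proof.
  intros Hr HN.
  replace N with (3 + (N - 3))%nat by lia.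
  pose proof (COS_bound t).
  apply (perturbed_product_le (1 + cos t) (50 * r ^ 4) (2 * r)
           (fun n => tail_weight r (4 + n)) (fun n => normsq_factor r PI (4 + n))
           (fun n => normsq_prod r t (3 + n)) (fun n => normsq_prod r PI (3 + n)));
    intros; try lra.
  - apply tail_weight_nonneg; lra.
  - apply tail_weight_succ_le; [lra | lia].
  - apply tail_weight_4_le; lra.
  - eapply Rle_trans; [apply pow2_ge_0 | apply normsq_factor_ge; lra].
  - apply normsq_prod_nonneg; lra.
  - reflexivity.
  - apply Rmult_le_compat_l; [apply normsq_prod_nonneg; lra |].
    apply normsq_factor_le_PI; [lra | lia].
  - rewrite Rmult_comm with (r1 := 1 + cos t). apply normsq_prod_3_le; lra.
Qed.

(** * The infinite product *)

Fixpoint mod_prod (q : C) (N : nat) : R :=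
  match N with
  | O => 1
  | S m => mod_prod q m * Cmod (1 - q ^ S m)
  end.

Lemma mod_prod_nonneg (q : C) (N : nat) : 0 <= mod_prod q N.
Proof.
  induction N; simpl; [lra |].
  apply Rmult_le_pos; [assumption | apply Cmod_ge_0].
Qed.

Lemma Cmod_eta_partial (q : C) (N : nat) : Cmod (eta_partial q N) = mod_prod q N ^ 24.
Proof.
  induction N as [| N IH].
  - simpl; rewrite Cmod_1; ring.
  - change (eta_partial q (S N)) with (eta_partial q N * (1 - q ^ S N) ^ 24)%C.
    change (mod_prod q (S N)) with (mod_prod q N * Cmod (1 - q ^ S N)).
    rewrite Cmod_mult, IH, Cmod_pow, Rpow_mult_distr; reflexivity.
Qed.

(* Each step multiplies by at most [1 + |q| ^ (N+1) <= exp (|q| ^ (N+1))], and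
   [|q| ^ (N+1) <= |q| ^ N - |q| ^ (N+1)] when [|q| <= 1/2]. *)
Lemma mod_prod_le_exp (q : C) (N : nat) : Cmod q <= 1 / 2 ->
  mod_prod q N <= exp (1 - Cmod q ^ N).
Proof.
  intros Hq; pose proof (Cmod_ge_0 q).
  induction N as [| N IH]; simpl mod_prod.
  - rewrite pow_O, Rminus_diag, exp_0; lra.
  - assert (Hstep : Cmod (1 - q ^ S N) <= exp (Cmod q ^ S N)).
    { eapply Rle_trans; [apply Cmod_one_sub_le |].
      rewrite Cmod_pow; apply exp_ineq1_le. }
    eapply Rle_trans.
    { apply Rmult_le_compat; [apply mod_prod_nonneg | apply Cmod_ge_0 | exact IH | exact Hstep]. }
    rewrite <- exp_plus; apply exp_le_exp.
    assert (0 <= Cmod q ^ N) by (apply pow_le; lra).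
    simpl pow; nra.
Qed.

Lemma eta_partial_increment_le (q : C) (n : nat) : Cmod q <= 1 / 2 ->
  Cmod (eta_partial q (S n) - eta_partial q n)
  <= exp 1 ^ 24 * (INR 24 * 2 ^ 24) * Cmod q * Cmod q ^ n.
Proof.
  intros Hq; pose proof (Cmod_ge_0 q).
  change (eta_partial q (S n)) with (eta_partial q n * (1 - q ^ S n) ^ 24)%C.
  replace (eta_partial q n * (1 - q ^ S n) ^ 24 - eta_partial q n)%C
    with (eta_partial q n * ((1 - q ^ S n) ^ 24 - 1 ^ 24))%C
    by (rewrite Cpow_1_l; ring).
  rewrite Cmod_mult, Cmod_eta_partial.
  assert (Hqn : Cmod q ^ S n <= 1) by (rewrite <- (pow1 (S n)); apply pow_incr; lra).
  assert (Hpow : Cmod ((1 - q ^ S n) ^ 24 - 1 ^ 24) <= INR 24 * 2 ^ 24 * (Cmod q * Cmod q ^ n)).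
  { eapply Rle_trans; [apply Cmod_Cpow_sub_le with (M := 2) |].
    - lra.
    - pose proof (Cmod_one_sub_le (q ^ S n)); rewrite Cmod_pow in *; lra.
    - rewrite Cmod_1; lra.
    - replace (1 - q ^ S n - 1)%C with (- q ^ S n)%C by ring.
      rewrite Cmod_opp, Cmod_pow; simpl pow; lra. }
  assert (Hprod : mod_prod q n ^ 24 <= exp 1 ^ 24).
  { apply pow_incr; split; [apply mod_prod_nonneg |].
    eapply Rle_trans; [apply mod_prod_le_exp; exact Hq |].
    apply exp_le_exp; assert (0 <= Cmod q ^ n) by (apply pow_le; lra); lra. }
  eapply Rle_trans.
  { apply Rmult_le_compat; [apply pow_le, mod_prod_nonneg | apply Cmod_ge_0 | exact Hprod | exact Hpow]. }
  right; ring.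
Qed.

Lemma eta_partial_converges (q : C) : Cmod q <= 1 / 2 ->
  ex_finite_lim_seq (fun N => fst (eta_partial q N))
  /\ ex_finite_lim_seq (fun N => snd (eta_partial q N)).
Proof.
  intros Hq; pose proof (Cmod_ge_0 q).
  split; apply (ex_finite_lim_seq_geometric_increments _
                 (exp 1 ^ 24 * (INR 24 * 2 ^ 24) * Cmod q) (Cmod q)); try lra;
    intros n; (eapply Rle_trans; [| apply eta_partial_increment_le; exact Hq]);
    (eapply Rle_trans; [| apply Rmax_Cmod]);
    destruct (eta_partial q (S n)), (eta_partial q n); simpl;
    [apply Rmax_l | apply Rmax_r].
Qed.

Lemma is_lim_seq_Cmod_eta_partial (q : C) : Cmod q <= 1 / 2 ->
  is_lim_seq (fun N => Cmod (eta_partial q N)) (Cmod (infprod q)).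
Proof.
  intros Hq; destruct (eta_partial_converges q Hq) as [[l1 H1] [l2 H2]].
  unfold infprod, Cmod; simpl fst; simpl snd.
  rewrite (is_lim_seq_unique _ _ H1), (is_lim_seq_unique _ _ H2); simpl real.
  apply is_lim_seq_continuous.
  - apply continuity_pt_sqrt; nra.
  - apply is_lim_seq_plus'; simpl pow;
      (apply is_lim_seq_mult'; [exact H1 || exact H2 |
         apply is_lim_seq_mult'; [exact H1 || exact H2 | apply is_lim_seq_const]]).
Qed.

Lemma Cmod_infprod_le (q q' : C) : Cmod q <= 1 / 2 -> Cmod q' <= 1 / 2 ->
  eventually (fun N => mod_prod q N <= mod_prod q' N) ->
  Cmod (infprod q) <= Cmod (infprod q').
Proof.
  intros Hq Hq' Hle.
  assert (Hev : eventually (fun N => Cmod (eta_partial q N) <= Cmod (eta_partial q' N))).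
  { destruct Hle as [N0 HN0]; exists N0; intros N HN.
    rewrite !Cmod_eta_partial; apply pow_incr.
    split; [apply mod_prod_nonneg | apply HN0; exact HN]. }
  exact (is_lim_seq_le_loc _ _ _ _ Hev
           (is_lim_seq_Cmod_eta_partial q Hq) (is_lim_seq_Cmod_eta_partial q' Hq')).
Qed.

Definition polar (r t : R) : C := (r * cos t, r * sin t).

Lemma qvar_polar (x B : R) : qvar (x, B) = polar (exp (- (2 * PI * B))) (2 * PI * x).
Proof.
  unfold qvar, cexp, polar, Re, Im; simpl.
  f_equal; f_equal; f_equal; ring.
Qed.

Lemma Cmod_polar (r t : R) : 0 <= r -> Cmod (polar r t) = r.
Proof.
  intros Hr; unfold Cmod, polar; simpl fst; simpl snd.
  replace ((r * cos t) ^ 2 + (r * sin t) ^ 2) with (r ^ 2)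
    by (pose proof (sin2_cos2 t) as H; unfold Rsqr in H; nra).
  apply sqrt_pow2; exact Hr.
Qed.

Lemma Cpow_polar (r t : R) (n : nat) : (polar r t ^ n)%C = polar (r ^ n) (INR n * t).
Proof.
  induction n as [| n IH].
  - unfold polar; simpl; rewrite Rmult_0_l, cos_0, sin_0.
    apply injective_projections; simpl; ring.
  - rewrite Cpow_S, IH, S_INR.
    replace ((INR n + 1) * t) with (t + INR n * t) by ring.
    unfold polar; rewrite cos_plus, sin_plus.
    apply injective_projections; simpl; ring.
Qed.

Lemma Cmod_one_sub_polar_sq (r t : R) (n : nat) :
  Cmod (1 - polar r t ^ n) ^ 2 = normsq_factor r t n.
Proof.
  unfold Cmod; rewrite pow2_sqrt by (apply Rplus_le_le_0_compat; apply pow2_ge_0).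
  rewrite Cpow_polar; unfold polar, normsq_factor; simpl fst; simpl snd.
  rewrite pow_double.
  pose proof (sin2_cos2 (INR n * t)) as H; unfold Rsqr in H.
  nra.
Qed.

Lemma mod_prod_polar_sq (r t : R) (N : nat) : mod_prod (polar r t) N ^ 2 = normsq_prod r t N.
Proof.
  induction N as [| N IH]; [simpl; ring |].
  change (mod_prod (polar r t) (S N))
    with (mod_prod (polar r t) N * Cmod (1 - polar r t ^ S N)).
  rewrite Rpow_mult_distr, IH, Cmod_one_sub_polar_sq; reflexivity.
Qed.

Lemma mod_prod_polar_le_PI (r t : R) (N : nat) : 0 < r <= 7 / 40 -> (3 <= N)%nat ->
  mod_prod (polar r t) N <= mod_prod (polar r PI) N.
Proof.
  intros Hr HN.
  pose proof (normsq_prod_le_PI r t N Hr HN) as Hsq.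
  rewrite <- !mod_prod_polar_sq in Hsq.
  pose proof (mod_prod_nonneg (polar r t) N). pose proof (mod_prod_nonneg (polar r PI) N).
  nra.
Qed.

Theorem mainTheorem6 (B : R) (hB : 287 / 1000 <= B) :
  (forall x : R, -(1/2) <= x <= 1/2 ->
     Cmod (modDelta (x, B)) <= Cmod (modDelta (1/2, B))) /\
  Cmod (modDelta (-(1/2), B)) = Cmod (modDelta (1/2, B)).
Proof.
  pose proof (nome_le B hB) as Hr.
  set (r := exp (- (2 * PI * B))) in *.
  assert (Hmod : forall x, Cmod (modDelta (x, B)) = r * Cmod (infprod (polar r (2 * PI * x)))).
  { intros x; unfold modDelta; rewrite qvar_polar; fold r.
    rewrite Cmod_mult, Cmod_polar; [reflexivity | lra]. }
  split.
  - intros x _.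
    rewrite !Hmod.
    replace (2 * PI * (1 / 2)) with PI by field.
    apply Rmult_le_compat_l; [lra |].
    apply Cmod_infprod_le; [rewrite Cmod_polar; lra .. |].
    exists 3%nat; intros N HN; apply mod_prod_polar_le_PI; assumption.
  - unfold modDelta; rewrite !qvar_polar.
    replace (2 * PI * - (1 / 2)) with (- PI) by field.
    replace (2 * PI * (1 / 2)) with PI by field.
    unfold polar; rewrite cos_neg, sin_neg, sin_PI, Ropp_0; reflexivity.
Qed.
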